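(* Let $\mathcal W,\mathcal U,\mathcal V$ be finite, $\Phi_{U|W}$ a codebook distribution and $\Phi_{V|W,U}$ a memoryless channel, with $\Phi_{V|W}=\sum_u\Phi_{U|W}\Phi_{V|W,U}$. Let $\mathcal B^{(n)}=\{u^n(w^n,j):w^n\in\mathcal W^n, j\in[2^{nR}]\}$ have independent entries with $u^n(w^n,j)\sim\prod_t\Phi_{U|W}(\cdot|w_t)$, and for each $w^n$ define $P_{V^n|W^n=w^n}(v^n)=2^{-nR}\sum_{j}\prod_{t=1}^n\Phi_{V|W,U}(v_t|w_t,u_t(w^n,j))$ and $Q_{V^n|W^n=w^n}(v^n)=\prod_t\Phi_{V|W}(v_t|w_t)$. Let $(\gamma_n)$ satisfy $\gamma_n\sqrt n\to\infty$. Then there exists a sequence $\epsilon_n\to0$, depending only on $\Phi_{U,V|W}$ and $(\gamma_n)$, such that for every $n$ and every $w^n\in\mathcal W^n$ with $R>I_{\mathbb P\Phi}(U;V|W)+\gamma_n$, $$\mathbf E\|P_{V^n|W^n=w^n}-Q_{V^n|W^n=w^n}\|_{TV}<\epsilon_n.$$ If $\gamma_n=\gamma>0$ is constant, $\epsilon_n$ can be chosen to decay exponentially in $n$.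
   Context: The empirical distribution of $w^n$ is $\mathbb P_{w^n}(w)=\frac1n\sum_t\mathbf 1(w_t=w)$; $I_{\mathbb P\Phi}(U;V|W)$ is computed under $\mathbb P_{w^n}(w)\Phi_{U,V|W}(u,v|w)$. Expectation over the random codebook; total variation is half the $\ell_1$ distance; logarithms base 2. *)

From Stdlib Require Import Reals.
From mathcomp Require Import all_boot.

Set Implicit Arguments.
Unset Strict Implicit.
Unset Printing Implicit Defensive.

Local Open Scope R_scope.

Definition rsum (T : finType) (f : T -> R) : R := foldr Rplus 0 (map f (enum T)).
Definition rprod (T : finType) (f : T -> R) : R := foldr Rmult 1 (map f (enum T)).

Definition log2 (x : R) : R := ln x / ln 2.

Definition is_dist (T : finType) (p : T -> R) : Prop :=
  (forall x, 0 <= p x) /\ rsum p = 1.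

Definition PhiVW (W U V : finType) (PU : W -> U -> R) (PV : W -> U -> V -> R)
  (w : W) (v : V) : R := rsum (fun u => PU w u * PV w u v).

Definition emp (W : finType) (n : nat) (wn : n.-tuple W) (w : W) : R :=
  INR (count (pred1 w) wn) / INR n.

(* I(U;V|W) computed under P_{w^n}(w) Phi_{U,V|W}(u,v|w), log base 2,
   with the convention 0 log 0 = 0 *)
Definition condMI (W U V : finType) (PU : W -> U -> R) (PV : W -> U -> V -> R)
  (n : nat) (wn : n.-tuple W) : R :=
  rsum (fun w => emp wn w *
    rsum (fun u => rsum (fun v =>
      let j := PU w u * PV w u v in
      if Req_EM_T j 0 then 0
      else j * log2 (j / (PU w u * PhiVW PU PV w v))))).

(* ceiling of a real as a nat *)
Definition nceil (x : R) : nat := Z.to_nat (- Int_part (- x)).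

(* number of codewords per w^n : |[2^{nR}]| = ceil(2^{nR}) *)
Definition ncw (n : nat) (Rt : R) : nat := nceil (Rpower 2 (INR n * Rt)).

Definition codebook (W U : finType) (n M : nat) : finType :=
  {ffun (n.-tuple W * 'I_M) -> n.-tuple U}.

Definition cbprob (W U : finType) (PU : W -> U -> R) (n M : nat)
  (B : codebook W U n M) : R :=
  rprod (fun k : (n.-tuple W * 'I_M)%type =>
    rprod (fun t : 'I_n => PU (tnth k.1 t) (tnth (B k) t))).

Definition Pind (W U V : finType) (PV : W -> U -> V -> R) (n M : nat)
  (B : codebook W U n M) (wn : n.-tuple W) (vn : n.-tuple V) : R :=
  / INR M * rsum (fun j : 'I_M =>
    rprod (fun t : 'I_n => PV (tnth wn t) (tnth (B (wn, j)) t) (tnth vn t))).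

Definition Qind (W U V : finType) (PU : W -> U -> R) (PV : W -> U -> V -> R)
  (n : nat) (wn : n.-tuple W) (vn : n.-tuple V) : R :=
  rprod (fun t : 'I_n => PhiVW PU PV (tnth wn t) (tnth vn t)).

Definition tvd (T : finType) (p q : T -> R) : R :=
  / 2 * rsum (fun x => Rabs (p x - q x)).

Definition ExpTV (W U V : finType) (PU : W -> U -> R) (PV : W -> U -> V -> R)
  (Rt : R) (n : nat) (wn : n.-tuple W) : R :=
  rsum (fun B : codebook W U n (ncw n Rt) =>
    cbprob PU B * tvd (Pind PV B wn) (Qind PU PV wn)).

From HB Require Import structures.
From Stdlib Require Import Reals Lra.
From mathcomp Require Import all_boot.

(* Soft covering with an i.i.d. random codebook (second-moment and Chernoff
   argument).  Fix w^n and an output v^n.  P(v^n) is the empirical mean of the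
   M = ceil(2^{nR}) i.i.d. codeword likelihoods X(u) = prod_t PV(v_t|w_t,u_t),
   whose mean is Q(v^n).  Truncating X at tau * Q(v^n), the bounded part is
   handled by the second moment of an empirical mean (variance E[X^2]/M), the
   tail part by its mean.  Summing over v^n gives
     E ||P - Q||_TV <= (tau/(2Mc) + c/2)/2 + Pr[X(U)/Q(V) > tau],
   where the last term (the atypical mass) is bounded by a Chernoff bound on
   the information density ln(PV/Phi_{V|W}), whose letterwise moment
   generating function is at most 1 + lam ln 2 I(U;V|W=w) + 2 lam^2 B^2.
   Choosing tau = 2^{n(I+g/2)}, c = 2^{-ng/4} and lam proportional to the
   rate gap g yields a bound 2 exp(-gap_exponent g n), exponentially small for
   constant g and vanishing as soon as g_n sqrt n -> oo. *)

Set Implicit Arguments.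
Unset Strict Implicit.
Unset Printing Implicit Defensive.

Local Open Scope R_scope.

HB.instance Definition _ :=
  Monoid.isComLaw.Build R 0 Rplus (fun x y z => esym (Rplus_assoc x y z))
    Rplus_comm Rplus_0_l.
HB.instance Definition _ :=
  Monoid.isComLaw.Build R 1 Rmult (fun x y z => esym (Rmult_assoc x y z))
    Rmult_comm Rmult_1_l.
HB.instance Definition _ := Monoid.isMulLaw.Build R 0 Rmult Rmult_0_l Rmult_0_r.
HB.instance Definition _ :=
  Monoid.isAddLaw.Build R Rmult Rplus Rmult_plus_distr_r Rmult_plus_distr_l.

Local Notation "\sum_ ( i : t ) F" := (\big[Rplus/0]_(i : t) F) : R_scope.
Local Notation "\sum_ ( i < n ) F" := (\big[Rplus/0]_(i < n) F) : R_scope.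
Local Notation "\prod_ ( i : t ) F" := (\big[Rmult/1]_(i : t) F) : R_scope.
Local Notation "\prod_ ( i < n ) F" := (\big[Rmult/1]_(i < n) F) : R_scope.

Lemma rsumE (T : finType) (f : T -> R) : rsum f = \sum_(x : T) f x.
Proof.
rewrite /rsum -big_enum /=; elim: (enum T) => [|x s IH]; first by rewrite big_nil.
by rewrite big_cons /= IH.
Qed.

Lemma rprodE (T : finType) (f : T -> R) : rprod f = \prod_(x : T) f x.
Proof.
rewrite /rprod -big_enum /=; elim: (enum T) => [|x s IH]; first by rewrite big_nil.
by rewrite big_cons /= IH.
Qed.

Lemma ln_div x y : 0 < x -> 0 < y -> ln (x / y) = ln x - ln y.
Proof. by move=> x0 y0; rewrite /Rdiv ln_mult ?ln_Rinv //; apply: Rinv_0_lt_compat. Qed.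

Lemma exp_le x y : x <= y -> exp x <= exp y.
Proof. by case=> [/exp_increasing/Rlt_le | ->] //; apply: Rle_refl. Qed.

Lemma exp_le_quad z : z <= / 2 -> exp z <= 1 + z + 2 * z ^ 2.
Proof.
move=> z_le; have e1 := exp_ineq1_le (- z).
have e2 : exp z * exp (- z) = 1 by rewrite -exp_plus Rplus_opp_r exp_0.
have := exp_pos z; have : 1 <= (1 - z) * (1 + z + 2 * z ^ 2) by nra.
nra.
Qed.

Section RealBigOps.
Variable I : finType.
Implicit Types f g : I -> R.

Lemma sumR_le f g : (forall i, f i <= g i) -> \sum_(i : I) f i <= \sum_(i : I) g i.
Proof. by move=> fg; apply: (big_ind2 Rle) => // *; lra. Qed.

Lemma sumR_ge0 f : (forall i, 0 <= f i) -> 0 <= \sum_(i : I) f i.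
Proof. by move=> f0; apply: (big_ind (Rle 0)) => // *; lra. Qed.

Lemma sumR_term_le f i0 : (forall i, 0 <= f i) -> f i0 <= \sum_(i : I) f i.
Proof.
move=> f0; rewrite (bigD1 i0) //=.
have : 0 <= \big[Rplus/0]_(i | i != i0) f i by apply: (big_ind (Rle 0)) => // *; lra.
lra.
Qed.

Lemma sumRB f g : \sum_(i : I) (f i - g i) = \sum_(i : I) f i - \sum_(i : I) g i.
Proof.
apply: (Rplus_eq_reg_r (\sum_(i : I) g i)); rewrite -big_split /=.
by ring_simplify; apply: eq_bigr => i _; ring.
Qed.

Lemma prodR_ge0 f : (forall i, 0 <= f i) -> 0 <= \prod_(i : I) f i.
Proof. by move=> f0; apply: (big_ind (Rle 0)) => // *; nra. Qed.

Lemma prodR_pos f : (forall i, 0 < f i) -> 0 < \prod_(i : I) f i.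
Proof. by move=> f0; apply: (big_ind (Rlt 0)) => // *; nra. Qed.

Lemma prodR_le f g : (forall i, 0 <= f i) -> (forall i, f i <= g i) ->
  \prod_(i : I) f i <= \prod_(i : I) g i.
Proof.
move=> f0 fg.
suff [] : 0 <= \prod_(i : I) f i /\ \prod_(i : I) f i <= \prod_(i : I) g i by [].
apply: (big_ind2 (fun a b => 0 <= a /\ a <= b)); first lra.
  by move=> a b c d [? ?] [? ?]; split; [nra | apply: Rmult_le_compat].
by move=> i _; split.
Qed.

Lemma prodR_pos_factor f i0 : (forall i, 0 <= f i) -> 0 < \prod_(i : I) f i -> 0 < f i0.
Proof.
move=> f0; case: (Rle_lt_or_eq_dec _ _ (f0 i0)) => // fi0.
by rewrite (bigD1 i0) //= -fi0 Rmult_0_l => /Rlt_irrefl.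
Qed.

Lemma prodR_single f i0 : (forall i, i != i0 -> f i = 1) -> \prod_(i : I) f i = f i0.
Proof. by move=> f1; rewrite (bigD1 i0) //= big1 // Rmult_1_r. Qed.

Lemma prodR_pair f i0 i1 : i0 != i1 -> (forall i, i != i0 -> i != i1 -> f i = 1) ->
  \prod_(i : I) f i = f i0 * f i1.
Proof.
move=> i01 f1; rewrite (bigD1 i0) //= (bigD1 i1) 1?eq_sym //= big1 ?Rmult_1_r //.
by move=> i /andP [? ?]; apply: f1.
Qed.

Lemma prodR_exp f : \prod_(i : I) exp (f i) = exp (\sum_(i : I) f i).
Proof. by symmetry; apply: (big_morph exp exp_plus exp_0). Qed.

Lemma ln_prodR f : (forall i, 0 < f i) -> ln (\prod_(i : I) f i) = \sum_(i : I) ln (f i).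
Proof.
move=> f0; rewrite -[RHS]ln_exp -prodR_exp.
by congr ln; apply: eq_bigr => i _; rewrite exp_ln.
Qed.

End RealBigOps.

Lemma sumR_const_ord (M : nat) (c : R) : \sum_(j < M) c = INR M * c.
Proof.
rewrite big_const_ord; elim: M => [|m IH] /=; first lra.
rewrite IH; case: m {IH} => [|m] /=; lra.
Qed.

Lemma sum_seq_count (X : finType) (F : X -> R) (s : seq X) :
  \big[Rplus/0]_(x <- s) F x = \sum_(x : X) INR (count (pred1 x) s) * F x.
Proof.
elim: s => [|a s IH]; first by rewrite big_nil big1 // => x _; rewrite Rmult_0_l.
rewrite big_cons IH (bigD1 a) //= [in RHS](bigD1 a) //= eq_refl.
rewrite [in RHS](eq_bigr (fun x => INR (count (pred1 x) s) * F x)) => [|x xa].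
  by rewrite plus_INR /=; ring.
by rewrite /= eq_sym (negbTE xa) add0n.
Qed.

Lemma sum_tuple_prod (X : finType) (n : nat) (F : 'I_n -> X -> R) :
  \sum_(u : n.-tuple X) \prod_(t < n) F t (tnth u t) = \prod_(t < n) \sum_(x : X) F t x.
Proof.
rewrite bigA_distr_bigA /= (reindex (fun u : n.-tuple X => [ffun i => tnth u i])) /=.
  by apply: eq_bigr => u _; apply: eq_bigr => t _; rewrite ffunE.
exists (fun f : {ffun 'I_n -> X} => [tuple f i | i < n]) => [u _ | f _].
  by apply: eq_from_tnth => i; rewrite tnth_mktuple ffunE.
by apply/ffunP => i; rewrite ffunE tnth_mktuple.
Qed.

Section RandomCodebook.
Variables (W U : finType) (PU : W -> U -> R).
Hypothesis hPU : forall w, is_dist (PU w).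
Variables (n M : nat).

Definition codeword_law (w : n.-tuple W) (u : n.-tuple U) : R :=
  \prod_(t < n) PU (tnth w t) (tnth u t).

Lemma codeword_law_ge0 w u : 0 <= codeword_law w u.
Proof. by apply: prodR_ge0 => t; case: (hPU (tnth w t)). Qed.

Lemma codeword_law_sum1 w : \sum_(u : n.-tuple U) codeword_law w u = 1.
Proof.
rewrite /codeword_law (sum_tuple_prod (fun t => PU (tnth w t))).
by apply: big1 => t _; rewrite -rsumE; case: (hPU (tnth w t)).
Qed.

Local Notation index := (n.-tuple W * 'I_M)%type.
Local Notation cb := (codebook W U n M).

Lemma cbprobE (B : cb) : cbprob PU B = \prod_(k : index) codeword_law k.1 (B k).
Proof. by rewrite /cbprob rprodE; apply: eq_bigr => k _; rewrite rprodE. Qed.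

Lemma cbprob_ge0 (B : cb) : 0 <= cbprob PU B.
Proof. by rewrite cbprobE; apply: prodR_ge0 => k; apply: codeword_law_ge0. Qed.

Definition Ecb (f : cb -> R) : R := \sum_(B : cb) (cbprob PU B * f B).

Lemma Ecb_ext f g : (forall B, f B = g B) -> Ecb f = Ecb g.
Proof. by move=> fg; apply: eq_bigr => B _; rewrite fg. Qed.

Lemma Ecb_le f g : (forall B, f B <= g B) -> Ecb f <= Ecb g.
Proof.
by move=> fg; apply: sumR_le => B; apply: Rmult_le_compat_l; [apply: cbprob_ge0 |].
Qed.

Lemma Ecb_add f g : Ecb (fun B => f B + g B) = Ecb f + Ecb g.
Proof. by rewrite /Ecb -big_split /=; apply: eq_bigr => B _; ring. Qed.

Lemma Ecb_scale c f : Ecb (fun B => c * f B) = c * Ecb f.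
Proof. by rewrite /Ecb big_distrr /=; apply: eq_bigr => B _; ring. Qed.

Lemma Ecb_sum (I : finType) (f : I -> cb -> R) :
  Ecb (fun B => \sum_(i : I) f i B) = \sum_(i : I) Ecb (f i).
Proof.
rewrite /Ecb; under eq_bigr do rewrite big_distrr /=.
exact: exchange_big.
Qed.

Lemma Ecb_prod (f : index -> n.-tuple U -> R) :
  Ecb (fun B => \prod_(k : index) f k (B k)) =
  \prod_(k : index) \sum_(u : n.-tuple U) (codeword_law k.1 u * f k u).
Proof.
rewrite bigA_distr_bigA /=; apply: eq_bigr => B _.
by rewrite cbprobE -big_split.
Qed.

Lemma Ecb_entry (k0 : index) (f : n.-tuple U -> R) :
  Ecb (fun B => f (B k0)) = \sum_(u : n.-tuple U) (codeword_law k0.1 u * f u).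
Proof.
pose F (k : index) u := if k == k0 then f u else 1.
have F1 k : k != k0 -> F k = fun=> 1 by rewrite /F => /negbTE ->.
have -> : Ecb (fun B => f (B k0)) = Ecb (fun B => \prod_(k : index) F k (B k)).
  apply: Ecb_ext => B; rewrite (prodR_single (i0 := k0)) => [|k /F1 -> //].
  by rewrite /F /= eq_refl.
rewrite Ecb_prod (prodR_single (i0 := k0)) => [|k /F1 ->]; first by rewrite /F /= eq_refl.
by under eq_bigr do rewrite Rmult_1_r; apply: codeword_law_sum1.
Qed.

Lemma Ecb_entries (k0 k1 : index) (f g : n.-tuple U -> R) : k0 != k1 ->
  Ecb (fun B => f (B k0) * g (B k1)) =
  (\sum_(u : n.-tuple U) codeword_law k0.1 u * f u) *
  (\sum_(u : n.-tuple U) codeword_law k1.1 u * g u).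
Proof.
move=> k01; have k10 : (k1 == k0) = false by rewrite eq_sym (negbTE k01).
pose F (k : index) u := if k == k0 then f u else if k == k1 then g u else 1.
have F1 k : k != k0 -> k != k1 -> F k = fun=> 1 by rewrite /F => /negbTE -> /negbTE ->.
have -> : Ecb (fun B => f (B k0) * g (B k1)) = Ecb (fun B => \prod_(k : index) F k (B k)).
  apply: Ecb_ext => B; rewrite (prodR_pair k01) => [|k /F1 F1k /F1k -> //].
  by rewrite /F /= eq_refl k10 eq_refl.
rewrite Ecb_prod (prodR_pair k01) => [|k /F1 F1k /F1k ->]; first by rewrite /F /= !eq_refl k10.
by under eq_bigr do rewrite Rmult_1_r; apply: codeword_law_sum1.
Qed.

Lemma Ecb_const c : Ecb (fun _ => c) = c.
Proof.
have E1 : Ecb (fun _ => 1) = 1.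
  rewrite (Ecb_ext (g := fun B => \prod_(k : index) 1)); last by move=> B; rewrite big1.
  rewrite (Ecb_prod (fun _ _ => 1)) big1 // => k _.
  by under eq_bigr do rewrite Rmult_1_r; apply: codeword_law_sum1.
by rewrite -[c in RHS]Rmult_1_r -E1 -Ecb_scale; apply: Ecb_ext => B; rewrite Rmult_1_r.
Qed.

End RandomCodebook.

Section EmpiricalMean.
Variables (W U : finType) (PU : W -> U -> R).
Hypothesis hPU : forall w, is_dist (PU w).
Variables (n M : nat) (wn : n.-tuple W).
Hypothesis M_gt0 : (0 < M)%N.

Local Notation pi := (codeword_law PU wn).
Local Notation cb := (codebook W U n M).
Local Notation E := (Ecb PU (n := n) (M := M)).

Definition mean (Y : n.-tuple U -> R) : R := \sum_(u : n.-tuple U) pi u * Y u.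

Definition emp_mean (Y : n.-tuple U -> R) (B : cb) : R :=
  / INR M * \sum_(j < M) Y (B (wn, j)).

Lemma INR_M_gt0 : 0 < INR M.
Proof. by apply: lt_0_INR; apply/ltP. Qed.

Lemma mean_le Y Z : (forall u, Y u <= Z u) -> mean Y <= mean Z.
Proof.
by move=> YZ; apply: sumR_le => u; apply: Rmult_le_compat_l; [apply: codeword_law_ge0 |].
Qed.

Lemma mean_ge0 Y : (forall u, 0 <= Y u) -> 0 <= mean Y.
Proof. by move=> Y0; apply: sumR_ge0 => u; apply: Rmult_le_pos; [apply: codeword_law_ge0 |]. Qed.

Lemma mean_add Y Z : mean (fun u => Y u + Z u) = mean Y + mean Z.
Proof. by rewrite /mean -big_split /=; apply: eq_bigr => u _; ring. Qed.

Lemma mean_affine a b Y : mean (fun u => a * Y u + b) = a * mean Y + b.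
Proof.
rewrite mean_add /mean -[b in RHS]Rmult_1_r -(codeword_law_sum1 hPU wn) !big_distrr /=.
by congr (_ + _); apply: eq_bigr => u _; ring.
Qed.

Lemma mean_centred_sq Y : mean (fun u => (Y u - mean Y) ^ 2) = mean (fun u => Y u ^ 2) - mean Y ^ 2.
Proof.
have -> : mean (fun u => (Y u - mean Y) ^ 2) =
          mean (fun u => Y u ^ 2 + (-2 * mean Y * Y u + mean Y ^ 2)).
  by apply: eq_bigr => u _; congr (_ * _); ring.
by rewrite mean_add mean_affine; ring.
Qed.

Lemma emp_mean_add Y Z B : emp_mean (fun u => Y u + Z u) B = emp_mean Y B + emp_mean Z B.
Proof. by rewrite /emp_mean big_split /=; ring. Qed.

Lemma emp_mean_sub_const Y m B : emp_mean (fun u => Y u - m) B = emp_mean Y B - m.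
Proof.
rewrite /emp_mean sumRB sumR_const_ord /=; have M0 := INR_M_gt0; field; lra.
Qed.

(* Each codeword of wn has the codeword law, so the empirical mean is unbiased. *)
Lemma Ecb_emp_mean Y : E (emp_mean Y) = mean Y.
Proof.
rewrite /emp_mean Ecb_scale Ecb_sum (eq_bigr (fun _ => mean Y)) => [|j _].
  by rewrite sumR_const_ord; have M0 := INR_M_gt0; field; lra.
exact: (Ecb_entry hPU (wn, j)).
Qed.

(* The codewords of wn are independent, so the second moment of the empirical
   mean of a centred Y is E[Y^2] / M. *)
Lemma Ecb_emp_mean_sq Y : mean Y = 0 ->
  E (fun B => emp_mean Y B ^ 2) = mean (fun u => Y u ^ 2) / INR M.
Proof.
move=> Y0.
have sq B : emp_mean Y B ^ 2 = / INR M * / INR M *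
    \sum_(j < M) \sum_(j' < M) Y (B (wn, j)) * Y (B (wn, j')).
  transitivity (/ INR M * / INR M *
    ((\sum_(j < M) Y (B (wn, j))) * (\sum_(j' < M) Y (B (wn, j'))))).
    by rewrite /emp_mean; ring.
  by rewrite big_distrl /=; congr (_ * _); apply: eq_bigr => j _; rewrite big_distrr.
have diag j : E (fun B => \sum_(j' < M) Y (B (wn, j)) * Y (B (wn, j'))) =
              mean (fun u => Y u ^ 2).
  rewrite Ecb_sum (bigD1 j) //= big1 => [|j' j'j].
    rewrite Rplus_0_r (Ecb_entry hPU (wn, j) (fun u => Y u * Y u)).
    by apply: eq_bigr => u _ /=; ring.
  rewrite (Ecb_entries hPU Y Y) -/(mean Y) ?Y0 ?Rmult_0_l //.
  by rewrite xpair_eqE eq_refl /= eq_sym.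
rewrite (Ecb_ext _ sq) Ecb_scale Ecb_sum (eq_bigr _ (fun j _ => diag j)) sumR_const_ord.
by have M0 := INR_M_gt0; field; lra.
Qed.

(* |x| <= x^2/(2a) + a/2, i.e. the AM-GM inequality (|x| - a)^2 >= 0. *)
Lemma abs_le_quad (x a : R) : 0 < a -> Rabs x <= x ^ 2 / (2 * a) + a / 2.
Proof.
move=> a0; apply: (Rmult_le_reg_r (2 * a)); first lra.
have -> : (x ^ 2 / (2 * a) + a / 2) * (2 * a) = Rabs x ^ 2 + a ^ 2.
  by rewrite -pow2_abs; field; lra.
have := Rle_0_sqr (Rabs x - a); rewrite /Rsqr; nra.
Qed.

Lemma mean_centred Y : mean (fun u => Y u - mean Y) = 0.
Proof.
have -> : mean (fun u => Y u - mean Y) = mean (fun u => 1 * Y u + - mean Y).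
  by apply: eq_bigr => u _; congr (_ * _); ring.
by rewrite mean_affine; ring.
Qed.

(* Mean absolute deviation of the empirical mean, from its second moment and
   the inequality |x| <= x^2/(2a) + a/2. *)
Lemma Ecb_emp_mean_dev Y a : 0 < a ->
  E (fun B => Rabs (emp_mean Y B - mean Y)) <=
  mean (fun u => Y u ^ 2) / (2 * a * INR M) + a / 2.
Proof.
move=> a0; set Z := fun u => Y u - mean Y.
apply: Rle_trans (_ : _ <= E (fun B => / (2 * a) * emp_mean Z B ^ 2 + a / 2)) _.
  apply: (Ecb_le hPU) => B; rewrite -emp_mean_sub_const.
  by apply: Rle_trans (abs_le_quad _ a0) _; rewrite /Z /Rdiv; apply: Req_le; ring.
rewrite Ecb_add Ecb_scale (Ecb_const hPU) Ecb_emp_mean_sq ?mean_centred // mean_centred_sq.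
have M0 := INR_M_gt0.
have -> : / (2 * a) * ((mean (fun u => Y u ^ 2) - mean Y ^ 2) / INR M) =
  mean (fun u => Y u ^ 2) / (2 * a * INR M) - mean Y ^ 2 / (2 * a * INR M).
  by field; lra.
have : 0 <= mean Y ^ 2 / (2 * a * INR M).
  by apply: Rmult_le_pos; [nra | apply/Rlt_le/Rinv_0_lt_compat; nra].
lra.
Qed.

Lemma emp_mean_ge0 Y B : (forall u, 0 <= Y u) -> 0 <= emp_mean Y B.
Proof.
move=> Y0; apply: Rmult_le_pos; last by apply: sumR_ge0.
by apply/Rlt_le/Rinv_0_lt_compat/INR_M_gt0.
Qed.

Lemma Ecb_dev_bounded Y q tau c : 0 <= q -> 0 < tau -> 0 < c ->
  (forall u, 0 <= Y u <= tau * q) -> mean Y <= q ->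
  E (fun B => Rabs (emp_mean Y B - mean Y)) <= (tau / (2 * INR M * c) + c / 2) * q.
Proof.
move=> q0 tau0 c0 Ybd Yq; have M0 := INR_M_gt0.
case: (Rle_lt_or_eq_dec _ _ q0) => [qpos | q_eq0]; last first.
  have Y0 u : Y u = 0 by have := Ybd u; rewrite -q_eq0; lra.
  have emp0 B : emp_mean Y B = 0.
    by rewrite /emp_mean big1 ?Rmult_0_r // => j _; apply: Y0.
  have mean0 : mean Y = 0 by rewrite /mean big1 // => u _; rewrite Y0 Rmult_0_r.
  rewrite (Ecb_ext _ (g := fun _ => 0)) => [|B]; last by rewrite emp0 mean0 Rminus_0_r Rabs_R0.
  by rewrite (Ecb_const hPU) -q_eq0 Rmult_0_r; apply: Rle_refl.
have Y2 : mean (fun u => Y u ^ 2) <= tau * q * q.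
  apply: Rle_trans (_ : tau * q * mean Y <= _); last by apply: Rmult_le_compat_l; nra.
  rewrite -[tau * q * mean Y]Rplus_0_r -mean_affine.
  by apply: mean_le => u; have := Ybd u; nra.
apply: Rle_trans (Ecb_emp_mean_dev Y (a := c * q) _) _; first nra.
have -> : (tau / (2 * INR M * c) + c / 2) * q = tau * q * q / (2 * (c * q) * INR M) + c * q / 2.
  by field; lra.
apply: Rplus_le_compat_r; apply: Rmult_le_compat_r => //.
by apply/Rlt_le/Rinv_0_lt_compat/Rmult_lt_0_compat; nra.
Qed.

(* Soft covering for a single output: the nonnegative codeword likelihood X
   is split at level tau * E X into a bounded part, controlled by its second
   moment, and a tail part, controlled by its mean. *)
Lemma Ecb_emp_mean_abs_dev X tau c : (forall u, 0 <= X u) -> 0 < tau -> 0 < c ->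
  E (fun B => Rabs (emp_mean X B - mean X)) <=
  (tau / (2 * INR M * c) + c / 2) * mean X +
  2 * mean (fun u => if Rlt_dec (tau * mean X) (X u) then X u else 0).
Proof.
move=> X0 tau0 c0; set q := mean X.
have q0 : 0 <= q by apply: mean_ge0.
have tq0 : 0 <= tau * q by apply: Rmult_le_pos; lra.
set hi := fun u => if Rlt_dec (tau * q) (X u) then X u else 0.
pose lo u := if Rlt_dec (tau * q) (X u) then 0 else X u.
have X_split u : X u = lo u + hi u by rewrite /lo /hi /=; case: Rlt_dec => h /=; ring.
have lo_bd u : 0 <= lo u <= tau * q by rewrite /lo; case: Rlt_dec => h /=; have := X0 u; lra.
have hi0 u : 0 <= hi u by rewrite /hi /=; case: Rlt_dec => h /=; have := X0 u; lra.
have q_split : q = mean lo + mean hi.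
  by rewrite /q -mean_add; apply: eq_bigr => u _; congr (_ * _); apply: X_split.
have lo_q : mean lo <= q by have := mean_ge0 hi0; lra.
have pt B : Rabs (emp_mean X B - q) <=
            Rabs (emp_mean lo B - mean lo) + (emp_mean hi B + mean hi).
  have -> : emp_mean X B = emp_mean lo B + emp_mean hi B.
    by rewrite -emp_mean_add /emp_mean; congr (_ * _); apply: eq_bigr => j _.
  have := emp_mean_ge0 B hi0; have := mean_ge0 hi0; rewrite q_split.
  by split_Rabs; lra.
apply: Rle_trans (Ecb_le hPU pt) _.
rewrite !Ecb_add (Ecb_const hPU) Ecb_emp_mean.
have := Ecb_dev_bounded q0 tau0 c0 lo_bd lo_q; lra.
Qed.

End EmpiricalMean.

Section OutputLaws.
Variables (W U V : finType) (PU : W -> U -> R) (PV : W -> U -> V -> R).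
Hypothesis hPU : forall w, is_dist (PU w).
Hypothesis hPV : forall w u, is_dist (PV w u).
Variables (n : nat) (wn : n.-tuple W).

Definition chan_law (u : n.-tuple U) (v : n.-tuple V) : R :=
  \prod_(t < n) PV (tnth wn t) (tnth u t) (tnth v t).

Lemma chan_law_ge0 u v : 0 <= chan_law u v.
Proof. by apply: prodR_ge0 => t; case: (hPV (tnth wn t) (tnth u t)). Qed.

Lemma QindE v : Qind PU PV wn v = mean PU wn (fun u => chan_law u v).
Proof.
rewrite /Qind rprodE.
under eq_bigr do rewrite /PhiVW rsumE.
rewrite -(sum_tuple_prod (fun t x => PU (tnth wn t) x * PV (tnth wn t) x (tnth v t))).
by apply: eq_bigr => u _; rewrite big_split.
Qed.

Lemma PhiVW_sum1 w : \sum_(y : V) PhiVW PU PV w y = 1.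
Proof.
under eq_bigr do rewrite /PhiVW rsumE.
rewrite exchange_big /=; case: (hPU w) => _; rewrite rsumE => <-.
apply: eq_bigr => x _; rewrite -big_distrr /= -rsumE.
by case: (hPV w x) => _ ->; rewrite Rmult_1_r.
Qed.

Lemma Qind_sum1 : \sum_(v : n.-tuple V) Qind PU PV wn v = 1.
Proof.
under eq_bigr do rewrite /Qind rprodE.
rewrite (sum_tuple_prod (fun t => PhiVW PU PV (tnth wn t))).
by apply: big1 => t _; apply: PhiVW_sum1.
Qed.

Lemma PindE M (B : codebook W U n M) v :
  Pind PV B wn v = emp_mean wn (fun u => chan_law u v) B.
Proof.
by rewrite /Pind rsumE; congr (_ * _); apply: eq_bigr => j _; rewrite rprodE.
Qed.

Definition atypical_mass (tau : R) : R :=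
  \sum_(v : n.-tuple V) mean PU wn (fun u =>
    if Rlt_dec (tau * Qind PU PV wn v) (chan_law u v) then chan_law u v else 0).

(* Soft-covering bound: summing the single-output estimate over all outputs
   bounds the expected total variation by a codebook-size term and the
   atypical mass. *)
Lemma ExpTV_le_atypical (Rt tau c : R) : (0 < ncw n Rt)%N -> 0 < tau -> 0 < c ->
  ExpTV PU PV Rt wn <=
  / 2 * (tau / (2 * INR (ncw n Rt) * c) + c / 2) + atypical_mass tau.
Proof.
move=> M0 tau0 c0; rewrite /ExpTV; set M := ncw n Rt in M0 *.
set k := tau / (2 * INR M * c) + c / 2.
have per_v v : Ecb PU (fun B : codebook W U n M => Rabs (Pind PV B wn v - Qind PU PV wn v))
    <= k * Qind PU PV wn v + 2 * mean PU wn (fun u =>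
         if Rlt_dec (tau * Qind PU PV wn v) (chan_law u v) then chan_law u v else 0).
  rewrite QindE (Ecb_ext _ (g := fun B =>
    Rabs (emp_mean wn (fun u => chan_law u v) B - mean PU wn (fun u => chan_law u v)))).
    by apply: Ecb_emp_mean_abs_dev => // u; apply: chan_law_ge0.
  by move=> B; rewrite PindE.
rewrite rsumE (eq_bigr (fun B => cbprob PU B *
    (/ 2 * \sum_(v : n.-tuple V) Rabs (Pind PV B wn v - Qind PU PV wn v)))); last first.
  by move=> B _; rewrite /tvd rsumE.
rewrite -/(Ecb PU _) Ecb_scale Ecb_sum.
apply: Rle_trans (Rmult_le_compat_l _ _ _ _ (sumR_le per_v)) _; first lra.
rewrite big_split /= -!big_distrr /= Qind_sum1 -/(atypical_mass tau).
by apply: Req_le; field.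
Qed.

End OutputLaws.

Section Chernoff.
Variables (W U V : finType) (PU : W -> U -> R) (PV : W -> U -> V -> R).
Hypothesis hPU : forall w, is_dist (PU w).
Hypothesis hPV : forall w u, is_dist (PV w u).

Definition joint (w : W) (x : U) (y : V) : R := PU w x * PV w x y.

(* Information density ln (Phi_{V|W,U} / Phi_{V|W}) in nats, set to 0 off the
   support of the joint law. *)
Definition info_dens (w : W) (x : U) (y : V) : R :=
  if Rlt_dec 0 (joint w x y) then ln (PV w x y / PhiVW PU PV w y) else 0.

Definition dens_mgf (lam : R) (w : W) : R :=
  \sum_(xy : U * V) joint w xy.1 xy.2 * exp (lam * info_dens w xy.1 xy.2).

Lemma joint_ge0 w x y : 0 <= joint w x y.
Proof. by apply: Rmult_le_pos; [case: (hPU w) | case: (hPV w x)]. Qed.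

Lemma joint_le_PhiVW w x y : joint w x y <= PhiVW PU PV w y.
Proof.
rewrite /PhiVW rsumE.
exact: (@sumR_term_le _ (fun x => joint w x y) x (fun x' => joint_ge0 w x' y)).
Qed.

Variables (n : nat) (wn : n.-tuple W).

Local Notation pi := (codeword_law PU wn).
Local Notation chan := (chan_law PV wn).

Lemma codeword_chan_prod u v :
  pi u * chan u v = \prod_(t < n) joint (tnth wn t) (tnth u t) (tnth v t).
Proof. by rewrite /codeword_law /chan_law -big_split. Qed.

Lemma prod_tilted lam u v : 0 < pi u * chan u v ->
  \prod_(t < n) (joint (tnth wn t) (tnth u t) (tnth v t) *
                 exp (lam * info_dens (tnth wn t) (tnth u t) (tnth v t))) =
  pi u * chan u v * exp (lam * ln (chan u v / Qind PU PV wn v)).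
Proof.
rewrite codeword_chan_prod => pos.
have jt t : 0 < joint (tnth wn t) (tnth u t) (tnth v t).
  by apply: prodR_pos_factor pos => t'; apply: joint_ge0.
have PVt t : 0 < PV (tnth wn t) (tnth u t) (tnth v t).
  have := jt t; rewrite /joint; case: (hPU (tnth wn t)) => PU0 _.
  case: (hPV (tnth wn t) (tnth u t)) => PV0 _; have := PU0 (tnth u t).
  have := PV0 (tnth v t); nra.
have Phit t : 0 < PhiVW PU PV (tnth wn t) (tnth v t).
  by apply: Rlt_le_trans (jt t) (joint_le_PhiVW _ _ _).
rewrite big_split /= prodR_exp; congr (_ * exp _).
rewrite -big_distrr /=; congr (_ * _).
have ln_chan : ln (chan u v) = \sum_(t < n) ln (PV (tnth wn t) (tnth u t) (tnth v t)).
  exact: ln_prodR.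
have ln_Q : ln (Qind PU PV wn v) = \sum_(t < n) ln (PhiVW PU PV (tnth wn t) (tnth v t)).
  by rewrite /Qind rprodE; apply: ln_prodR.
rewrite ln_div; last by rewrite /Qind rprodE; apply: prodR_pos.
  rewrite ln_chan ln_Q -sumRB; apply: eq_bigr => t _.
  rewrite /info_dens; case: Rlt_dec => [jpos | jneg] /=; last by case: (jneg (jt t)).
  exact: ln_div.
exact: prodR_pos.
Qed.

Lemma atypical_term_le lam s u v : 0 <= lam ->
  pi u * (if Rlt_dec (exp s * Qind PU PV wn v) (chan u v) then chan u v else 0) <=
  exp (- (lam * s)) * \prod_(t < n) (joint (tnth wn t) (tnth u t) (tnth v t) *
                 exp (lam * info_dens (tnth wn t) (tnth u t) (tnth v t))).
Proof.
move=> lam0.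
have rhs0 : 0 <= exp (- (lam * s)) * \prod_(t < n) (joint (tnth wn t) (tnth u t) (tnth v t) *
                 exp (lam * info_dens (tnth wn t) (tnth u t) (tnth v t))).
  apply: Rmult_le_pos; first exact/Rlt_le/exp_pos.
  by apply: prodR_ge0 => t; apply: Rmult_le_pos; [apply: joint_ge0 | apply/Rlt_le/exp_pos].
case: Rlt_dec => [atyp | _] /=; last by rewrite Rmult_0_r.
have pc0 : 0 <= pi u * chan u v.
  by apply: Rmult_le_pos; [apply: codeword_law_ge0 | apply: chan_law_ge0].
case: (Rle_lt_or_eq_dec _ _ pc0) => [pos | <- //].
rewrite prod_tilted //.
have Qpos : 0 < Qind PU PV wn v.
  rewrite QindE; apply: Rlt_le_trans pos _.
  apply: (@sumR_term_le _ (fun u => pi u * chan u v)) => u'.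
  by apply: Rmult_le_pos; [apply: codeword_law_ge0 | apply: chan_law_ge0].
have s_lt : s < ln (chan u v / Qind PU PV wn v).
  rewrite -[s]ln_exp; apply: ln_increasing; first exact: exp_pos.
  by apply: (Rmult_lt_reg_r (Qind PU PV wn v)) => //; field_simplify; lra.
set L := ln (chan u v / Qind PU PV wn v) in s_lt *.
have E1 : 1 <= exp (- (lam * s)) * exp (lam * L).
  rewrite -exp_plus -exp_0; apply: exp_le.
  have : lam * s <= lam * L by apply: Rmult_le_compat_l => //; lra.
  lra.
have := Rmult_le_compat_l _ _ _ (Rlt_le _ _ pos) E1; nra.
Qed.

Lemma atypical_mass_le lam s : 0 <= lam ->
  atypical_mass PU PV wn (exp s) <= exp (- (lam * s)) * \prod_(t < n) dens_mgf lam (tnth wn t).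
Proof.
move=> lam0; set f := fun t (x : U) (y : V) =>
  joint (tnth wn t) x y * exp (lam * info_dens (tnth wn t) x y).
apply: Rle_trans (_ : _ <= \sum_(v : n.-tuple V) \sum_(u : n.-tuple U)
   exp (- (lam * s)) * \prod_(t < n) f t (tnth u t) (tnth v t)) _.
  by apply: sumR_le => v; apply: sumR_le => u; apply: atypical_term_le.
apply: Req_le; under eq_bigr do rewrite -big_distrr /=.
rewrite -big_distrr /=; congr (_ * _).
under eq_bigr => v _ do rewrite (sum_tuple_prod (fun t x => f t x (tnth v t))).
rewrite (sum_tuple_prod (fun t y => \sum_(x : U) f t x y)).
by apply: eq_bigr => t _; rewrite exchange_big pair_big.
Qed.

End Chernoff.

Section LetterBound.
Variables (W U V : finType) (PU : W -> U -> R) (PV : W -> U -> V -> R).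
Hypothesis hPU : forall w, is_dist (PU w).
Hypothesis hPV : forall w u, is_dist (PV w u).

Local Notation joint := (joint PU PV).
Local Notation info_dens := (info_dens PU PV).

Definition letterMI (w : W) : R :=
  rsum (fun u => rsum (fun v =>
    let j := PU w u * PV w u v in
    if Req_EM_T j 0 then 0 else j * log2 (j / (PU w u * PhiVW PU PV w v)))).

(* A uniform bound on the information density, which takes finitely many values. *)
Definition dens_bound : R :=
  1 + \sum_(w : W) \sum_(xy : U * V) Rabs (info_dens w xy.1 xy.2).

Lemma dens_bound_ge1 : 1 <= dens_bound.
Proof.
have : 0 <= \sum_(w : W) \sum_(xy : U * V) Rabs (info_dens w xy.1 xy.2).
  by apply: sumR_ge0 => w; apply: sumR_ge0 => xy; apply: Rabs_pos.
rewrite /dens_bound; lra.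
Qed.

Lemma info_dens_le w x y : Rabs (info_dens w x y) <= dens_bound.
Proof.
have inner w' : 0 <= \sum_(xy : U * V) Rabs (info_dens w' xy.1 xy.2).
  by apply: sumR_ge0 => xy; apply: Rabs_pos.
have := @sumR_term_le _ (fun xy : U * V => Rabs (info_dens w xy.1 xy.2)) (x, y)
  (fun _ => Rabs_pos _).
have := @sumR_term_le _ (fun w => \sum_(xy : U * V) Rabs (info_dens w xy.1 xy.2)) w inner.
rewrite /dens_bound /=; lra.
Qed.

Lemma joint_sum1 w : \sum_(xy : U * V) joint w xy.1 xy.2 = 1.
Proof.
rewrite -(pair_big xpredT xpredT (fun x y => joint w x y)) /=.
have PV1 x : \sum_(y : V) PV w x y = 1 by rewrite -rsumE; case: (hPV w x).
rewrite (eq_bigr (fun x => PU w x)) => [|x _]; first by rewrite -rsumE; case: (hPU w).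
by rewrite /joint -big_distrr /= PV1 Rmult_1_r.
Qed.

Lemma joint_dens_sum w :
  \sum_(xy : U * V) joint w xy.1 xy.2 * info_dens w xy.1 xy.2 = ln 2 * letterMI w.
Proof.
rewrite -(pair_big xpredT xpredT (fun x y => joint w x y * info_dens w x y)) /=.
rewrite /letterMI rsumE big_distrr /=; apply: eq_bigr => x _.
rewrite rsumE big_distrr /=; apply: eq_bigr => y _.
have ln2 : 0 < ln 2 by rewrite -ln_1; apply: ln_increasing; lra.
have j0 := joint_ge0 hPU hPV w x y.
rewrite /info_dens; move: j0; rewrite /joint => j0.
case: Rlt_dec => [jpos | jn]; case: Req_EM_T => [jz | jnz] /=; try lra.
have PUx : 0 < PU w x by case: (hPU w) => PU0 _; case: (hPV w x) => PV0 _; have := PU0 x; have := PV0 y; nra.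
have Phi : 0 < PhiVW PU PV w y by apply: Rlt_le_trans jpos (joint_le_PhiVW hPU hPV _ _ _).
have -> : PU w x * PV w x y / (PU w x * PhiVW PU PV w y) = PV w x y / PhiVW PU PV w y.
  by field; lra.
by rewrite /log2; field; lra.
Qed.

Lemma dens_mgf_le lam w : 0 <= lam -> lam * dens_bound <= / 2 ->
  dens_mgf PU PV lam w <= 1 + lam * (ln 2 * letterMI w) + 2 * lam ^ 2 * dens_bound ^ 2.
Proof.
move=> lam0 lamB; rewrite -joint_dens_sum.
set K := 2 * lam ^ 2 * dens_bound ^ 2.
have -> : 1 + lam * \sum_(xy : U * V) joint w xy.1 xy.2 * info_dens w xy.1 xy.2 + K =
    \sum_(xy : U * V) joint w xy.1 xy.2 * (1 + lam * info_dens w xy.1 xy.2 + K).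
  rewrite [RHS](eq_bigr (fun xy => joint w xy.1 xy.2 + lam * (joint w xy.1 xy.2 *
      info_dens w xy.1 xy.2) + K * joint w xy.1 xy.2)) => [|xy _]; last by ring.
  by rewrite !big_split /= -!big_distrr /= joint_sum1; ring.
apply: sumR_le => [[x y]] /=; apply: Rmult_le_compat_l; first exact: joint_ge0.
have B1 := dens_bound_ge1; have d_le := info_dens_le w x y.
set d := info_dens w x y in d_le *.
have ld : lam * d <= / 2.
  have : lam * d <= lam * Rabs d by apply: Rmult_le_compat_l => //; apply: Rle_abs.
  have : lam * Rabs d <= lam * dens_bound by apply: Rmult_le_compat_l.
  lra.
apply: Rle_trans (exp_le_quad ld) _.
have : d ^ 2 <= dens_bound ^ 2 by rewrite -pow2_abs; apply: pow_incr; split; [apply: Rabs_pos |].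
rewrite /K; nra.
Qed.

Lemma sum_letterMI n (wn : n.-tuple W) :
  \sum_(t < n) letterMI (tnth wn t) = INR n * condMI PU PV wn.
Proof.
rewrite -(big_tuple _ _ wn xpredT) sum_seq_count /condMI rsumE big_distrr /=.
apply: eq_bigr => w _; rewrite -/(letterMI w) /emp.
case: n wn => [|m] wn; first by rewrite tuple0 /= !Rmult_0_l.
have : 0 < INR m.+1 by apply: lt_0_INR; apply/ltP.
by move=> m0; set k := INR (count _ _); field; lra.
Qed.

Lemma prod_dens_mgf_le n (wn : n.-tuple W) lam : 0 <= lam -> lam * dens_bound <= / 2 ->
  \prod_(t < n) dens_mgf PU PV lam (tnth wn t) <=
  exp (lam * ln 2 * (INR n * condMI PU PV wn) + INR n * (2 * lam ^ 2 * dens_bound ^ 2)).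
Proof.
move=> lam0 lamB.
apply: Rle_trans (_ : _ <= \prod_(t < n)
   exp (lam * (ln 2 * letterMI (tnth wn t)) + 2 * lam ^ 2 * dens_bound ^ 2)) _.
  apply: prodR_le => t.
    by apply: sumR_ge0 => xy; apply: Rmult_le_pos; [apply: joint_ge0 | apply/Rlt_le/exp_pos].
  apply: Rle_trans (dens_mgf_le _ lam0 lamB) _.
  by have := exp_ineq1_le (lam * (ln 2 * letterMI (tnth wn t)) + 2 * lam ^ 2 * dens_bound ^ 2); lra.
rewrite prodR_exp; apply: Req_le; congr exp.
rewrite big_split /= sumR_const_ord; congr (_ + _).
by rewrite -sum_letterMI big_distrr /=; apply: eq_bigr => t _; ring.
Qed.

End LetterBound.

Lemma nceil_ge x : 0 < x -> x <= INR (nceil x) /\ (0 < nceil x)%N.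
Proof.
move=> x0; have [up lo] := base_Int_part (- x).
set z := (- Int_part (- x))%Z.
have z0 : (0 <= z)%Z by apply: le_IZR; rewrite /z opp_IZR; lra.
have Ez : INR (nceil x) = IZR z by rewrite /nceil -/z INR_IZR_INZ Znat.Z2Nat.id.
rewrite Ez; split; first by rewrite /z opp_IZR; lra.
by case E : (nceil x) Ez => [|m] //= E0; move: up; rewrite -[IZR (Int_part _)]Ropp_involutive -opp_IZR -/z -E0; lra.
Qed.

Lemma ncw_ge n Rt : exp (INR n * ln 2 * Rt) <= INR (ncw n Rt) /\ (0 < ncw n Rt)%N.
Proof.
rewrite /ncw /Rpower (_ : INR n * Rt * ln 2 = INR n * ln 2 * Rt); last by ring.
exact/nceil_ge/exp_pos.
Qed.

Lemma ln2_pos : 0 < ln 2.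
Proof. by rewrite -ln_1; apply: ln_increasing; lra. Qed.

Section RateGap.
Variables (W U V : finType) (PU : W -> U -> R) (PV : W -> U -> V -> R).
Hypothesis hPU : forall w, is_dist (PU w).
Hypothesis hPV : forall w u, is_dist (PV w u).

Local Notation B := (dens_bound PU PV).

Lemma ExpTV_le n (wn : n.-tuple W) (Rt s c lam : R) :
  0 < c -> 0 <= lam -> lam * B <= / 2 ->
  ExpTV PU PV Rt wn <= / 2 * (exp s / (2 * INR (ncw n Rt) * c) + c / 2) +
    exp (- (lam * s)) *
    exp (lam * ln 2 * (INR n * condMI PU PV wn) + INR n * (2 * lam ^ 2 * B ^ 2)).
Proof.
move=> c0 lam0 lamB; have [_ M0] := ncw_ge n Rt.
apply: Rle_trans (ExpTV_le_atypical hPU hPV wn M0 (exp_pos s) c0) _.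
apply/Rplus_le_compat_l/(Rle_trans _ _ _ (atypical_mass_le hPU hPV wn s lam0)).
by apply: Rmult_le_compat_l; [apply/Rlt_le/exp_pos | apply: prod_dens_mgf_le].
Qed.

(* Crude bound, valid at every rate (take s = lam = 0 and c = 1). *)
Lemma ExpTV_le_crude n (wn : n.-tuple W) Rt : ExpTV PU PV Rt wn <= 3 / 2.
Proof.
have [_ M0] := ncw_ge n Rt.
have M1 : 1 <= INR (ncw n Rt) by apply: (le_INR 1); apply/leP.
apply: Rle_trans (ExpTV_le wn Rt 0 Rlt_0_1 (Rle_refl 0) _) _; first by rewrite Rmult_0_l; lra.
rewrite exp_0 Rmult_0_l Ropp_0 exp_0 Rmult_1_l.
rewrite (_ : 0 * ln 2 * _ + _ = 0); last by ring.
rewrite exp_0 /Rdiv Rmult_1_l.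
have : / (2 * INR (ncw n Rt) * 1) <= / 2 by apply: Rinv_le_contravar; lra.
lra.
Qed.

Definition chernoff_param (g : R) : R := Rmin (/ (2 * B)) (ln 2 * g / (8 * B ^ 2)).

Lemma chernoff_param_props g : 0 < g ->
  [/\ 0 < chernoff_param g, chernoff_param g * B <= / 2, chernoff_param g <= 1
    & chernoff_param g <= ln 2 * g / (8 * B ^ 2)].
Proof.
move=> g0; have B1 := dens_bound_ge1 PU PV; have ln2 := ln2_pos.
have le1 := Rmin_l (/ (2 * B)) (ln 2 * g / (8 * B ^ 2)).
have le2 := Rmin_r (/ (2 * B)) (ln 2 * g / (8 * B ^ 2)).
rewrite /chernoff_param; split => //.
- apply: Rmin_glb_lt; first by apply: Rinv_0_lt_compat; lra.
  by apply: Rdiv_lt_0_compat; nra.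
- rewrite (_ : / 2 = / (2 * B) * B); last by field; lra.
  by apply: Rmult_le_compat_r; lra.
- apply: Rle_trans le1 _; rewrite -Rinv_1; apply: Rinv_le_contravar; lra.
Qed.

Definition gap_exponent (g : R) (n : nat) : R := chernoff_param g * (INR n * ln 2) * g / 4.

(* A rate gap g > 0 above the conditional mutual information forces the
   expected total variation to decay like exp (- gap_exponent g n): choose the
   threshold 2^{n(I + g/2)} and smoothing exp (- n g ln 2 / 4). *)
Lemma ExpTV_gap n (wn : n.-tuple W) (Rt g : R) : 0 < g ->
  Rt > condMI PU PV wn + g -> ExpTV PU PV Rt wn <= 2 * exp (- gap_exponent g n).
Proof.
move=> g0 gap; have [lam0 lamB lam1 lamg] := chernoff_param_props g0.
have B1 := dens_bound_ge1 PU PV; have ln2 := ln2_pos.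
set lam := chernoff_param g in lam0 lamB lam1 lamg *.
set a := INR n * ln 2; have a0 : 0 <= a by apply: Rmult_le_pos; [apply: pos_INR | lra].
set I := condMI PU PV wn in gap *.
set c := exp (- (a * g / 4)); have c0 : 0 < c by apply: exp_pos.
have [Mge _] := ncw_ge n Rt; set M := INR (ncw n Rt) in Mge *.
have M0 : 0 < M by have := exp_pos (INR n * ln 2 * Rt); lra.
have := ExpTV_le wn Rt (a * (I + g / 2)) c0 (Rlt_le _ _ lam0) lamB; rewrite -/M.
have codebook_term : exp (a * (I + g / 2)) / (2 * M * c) <= c / 2.
  have : exp (a * (I + g / 2)) <= M * (c * c).
    apply: Rle_trans (_ : exp (a * Rt) * (c * c) <= _); last first.
      by apply: Rmult_le_compat_r; [nra | rewrite /a].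
    rewrite /c -!exp_plus; apply: exp_le.
    have : a * (I + g) <= a * Rt by apply: Rmult_le_compat_l => //; lra.
    lra.
  move=> H; apply: (Rmult_le_reg_r (2 * M * c)); first nra.
  rewrite (_ : exp _ / _ * _ = exp (a * (I + g / 2))); last by field; lra.
  nra.
have tail_term : exp (- (lam * (a * (I + g / 2)))) *
    exp (lam * ln 2 * (INR n * I) + INR n * (2 * lam ^ 2 * B ^ 2)) <=
    exp (- gap_exponent g n).
  rewrite -exp_plus; apply: exp_le; rewrite /gap_exponent -/lam -/a.
  have : lam * (8 * B ^ 2) <= ln 2 * g.
    apply: Rle_trans (Rmult_le_compat_r _ _ _ _ lamg) _; first nra.
    by apply: Req_le; field; nra.
  move=> lam8; have nl0 : 0 <= INR n * lam by apply: Rmult_le_pos; [apply: pos_INR | lra].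
  have := Rmult_le_compat_l _ _ _ nl0 lam8; rewrite /a; lra.
have smooth_term : c <= exp (- gap_exponent g n).
  apply: exp_le; rewrite /gap_exponent -/lam -/a.
  have : lam * (a * g) <= 1 * (a * g).
    by apply: Rmult_le_compat_r => //; apply: Rmult_le_pos; lra.
  lra.
rewrite -/I; have := exp_pos (- gap_exponent g n); lra.
Qed.

End RateGap.

Lemma ln2_lt1 : ln 2 < 1.
Proof.
rewrite -[1]ln_exp; apply: ln_increasing; first lra.
by have := exp_ineq1 1 R1_neq_R0; lra.
Qed.

Section Asymptotics.
Variables (W U V : finType) (PU : W -> U -> R) (PV : W -> U -> V -> R).

Local Notation B := (dens_bound PU PV).

Definition kappa : R := ln 2 ^ 2 / (32 * B ^ 2).

Lemma gap_exponent_lb g n : 1 <= g * sqrt (INR n) ->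
  kappa * (g * sqrt (INR n)) <= gap_exponent PU PV g n.
Proof.
move=> x1; have B1 := dens_bound_ge1 PU PV; have ln2 := ln2_pos.
have sq0 := sqrt_pos (INR n).
have sn1 : 1 <= sqrt (INR n).
  case: n x1 {sq0} => [|m] x1; first by move: x1; rewrite sqrt_0 Rmult_0_r; lra.
  by rewrite -sqrt_1; apply: sqrt_le_1_alt; rewrite S_INR; have := pos_INR m; lra.
have g0 : 0 < g by nra.
have n_sq : INR n = sqrt (INR n) * sqrt (INR n) by rewrite sqrt_sqrt //; apply: pos_INR.
have k0 : 0 < kappa by rewrite /kappa; apply: Rdiv_lt_0_compat; nra.
rewrite /gap_exponent /chernoff_param /Rmin; case: Rle_dec => _.
- have -> : / (2 * B) * (INR n * ln 2) * g / 4 = ln 2 / (8 * B) * g * INR n by field; lra.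
  have kB : kappa <= ln 2 / (8 * B).
    rewrite /kappa (_ : ln 2 / (8 * B) = ln 2 * (4 * B) / (32 * B ^ 2)); last by field; lra.
    apply: Rmult_le_compat_r; first by apply/Rlt_le/Rinv_0_lt_compat; nra.
    have := ln2_lt1; nra.
  have sn_le : sqrt (INR n) <= INR n by rewrite [X in _ <= X]n_sq; nra.
  have : g * sqrt (INR n) <= g * INR n by apply: Rmult_le_compat_l; lra.
  have : 0 < ln 2 / (8 * B) by apply: Rdiv_lt_0_compat; lra.
  nra.
- have -> : ln 2 * g / (8 * B ^ 2) * (INR n * ln 2) * g / 4 =
            kappa * (g * sqrt (INR n)) ^ 2 by rewrite /kappa [in LHS]n_sq; field; lra.
  have : g * sqrt (INR n) <= (g * sqrt (INR n)) ^ 2 by nra.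
  by move=> x_le; apply: Rmult_le_compat_l; lra.
Qed.

Definition vanishing_eps (gamma : nat -> R) (n : nat) : R :=
  if Rlt_dec 0 (gamma n) then 3 * exp (- gap_exponent PU PV (gamma n) n) else 2.

Lemma vanishing_eps_cv gamma : cv_infty (fun n => gamma n * sqrt (INR n)) ->
  Un_cv (vanishing_eps gamma) 0.
Proof.
move=> cv e e0; have B1 := dens_bound_ge1 PU PV; have ln2 := ln2_pos.
have k0 : 0 < kappa by rewrite /kappa; apply: Rdiv_lt_0_compat; nra.
set X := Rmax 1 (ln (3 / e) / kappa + 1).
have [N XN] := cv X; exists N => n nN; have Xn := XN n nN.
have X1 := Rmax_l 1 (ln (3 / e) / kappa + 1); have X2 := Rmax_r 1 (ln (3 / e) / kappa + 1).
have x1 : 1 <= gamma n * sqrt (INR n) by rewrite -/X in X1; lra.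
have lb := gap_exponent_lb x1.
have g0 : 0 < gamma n by have := sqrt_pos (INR n); nra.
rewrite /R_dist /vanishing_eps; case: Rlt_dec => [_ | /(_ g0) //] /=.
rewrite Rminus_0_r Rabs_right; last by have := exp_pos (- gap_exponent PU PV (gamma n) n); lra.
have exp_gap : ln (3 / e) < gap_exponent PU PV (gamma n) n.
  have : ln (3 / e) / kappa * kappa < X * kappa by apply: Rmult_lt_compat_r; rewrite -/X in X2; lra.
  have : X * kappa < gamma n * sqrt (INR n) * kappa by apply: Rmult_lt_compat_r.
  rewrite (_ : ln (3 / e) / kappa * kappa = ln (3 / e)); last by field; lra.
  lra.
have : exp (- gap_exponent PU PV (gamma n) n) < exp (- ln (3 / e)).
  by apply: exp_increasing; lra.
rewrite [exp (- ln _)]exp_Ropp exp_ln; last by apply: Rdiv_lt_0_compat; lra.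
rewrite (_ : / (3 / e) = e / 3); last by field; lra.
lra.
Qed.

End Asymptotics.

Theorem mainTheorem14 (W U V : finType) (PU : W -> U -> R) (PV : W -> U -> V -> R)
  (hPU : forall w, is_dist (PU w)) (hPV : forall w u, is_dist (PV w u)) :
  (forall gamma : nat -> R,
     cv_infty (fun n => gamma n * sqrt (INR n)) ->
     exists eps : nat -> R, Un_cv eps 0 /\
       forall (n : nat) (wn : n.-tuple W) (Rt : R),
         Rt > condMI PU PV wn + gamma n -> ExpTV PU PV Rt wn < eps n)
  /\
  (forall gamma : R, 0 < gamma ->
     exists eps : nat -> R,
       (exists c K : R, 0 < c /\ forall n : nat, eps n <= K * exp (- c * INR n)) /\
       forall (n : nat) (wn : n.-tuple W) (Rt : R),
         Rt > condMI PU PV wn + gamma -> ExpTV PU PV Rt wn < eps n).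
Proof.
split.
- move=> gamma cv; exists (vanishing_eps PU PV gamma); split; first exact: vanishing_eps_cv.
  move=> n wn Rt gap; rewrite /vanishing_eps; case: Rlt_dec => g0 /=.
    have := ExpTV_gap hPU hPV g0 gap.
    have := exp_pos (- gap_exponent PU PV (gamma n) n); lra.
  by have := ExpTV_le_crude hPU hPV wn Rt; lra.
- move=> g g0; exists (fun n => 3 * exp (- gap_exponent PU PV g n)); split.
    have [lam0 _ _ _] := chernoff_param_props PU PV g0.
    exists (chernoff_param PU PV g * ln 2 * g / 4), 3; split.
      apply: Rmult_lt_0_compat; last lra.
      by apply: Rmult_lt_0_compat => //; apply: Rmult_lt_0_compat => //; apply: ln2_pos.
    by move=> n; apply: Req_le; rewrite /gap_exponent; congr (_ * exp _); field.
  move=> n wn Rt gap; have := ExpTV_gap hPU hPV g0 gap.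
  have := exp_pos (- gap_exponent PU PV g n); lra.
Qed.
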